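(* Let $(\mathcal{H},\langle\cdot,\cdot\rangle)$ be an infinite-dimensional separable Hilbert space, and let $\mathsf{H}$ be a quasi-self-adjoint operator in $\mathcal{H}$ with purely real, simple, discrete spectrum, whose eigenfunctions $\{\psi_n\}_{n=1}^\infty$ form a basis of $\mathcal{H}$ that is quadratically close to some orthonormal basis $\{\chi_n\}_{n=1}^\infty$, i.e. $\sum_{n=1}^\infty\|\psi_n-\chi_n\|^2<\infty$. Let $\{\phi_n\}_{n=1}^\infty$ be the eigenfunctions of $\mathsf{H}^*$, normalised so that $\langle\psi_m,\phi_n\rangle=\delta_{nm}$ and $\|\phi_n\|=1$ for all $n,m$. Let $\Theta$ be a metric operator for $\mathsf{H}$ of the form $$\Theta=\sum_{n=1}^\infty C_n\langle\phi_n,\cdot\rangle\phi_n \quad(\text{strong limit}),$$ where $C_-\le C_n\le C_+$ for all $n$ with some constants $0<C_-\le C_+<\infty$. Then $\mathsf{I}-\Theta$ is a Hilbert–Schmidt operator if and only if $C_n=1+\alpha_n$ for a sequence $\alpha=\{\alpha_n\}_{n=1}^\infty\in\ell^2(\mathbb{N})$.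
   Context: The inner product is linear in the second entry. An operator $\mathsf{H}$ in $\mathcal{H}$ is quasi-self-adjoint if it is densely defined and there is a bounded, non-negative self-adjoint operator $\Theta:\mathcal{H}\to\mathcal{H}$ with bounded inverse such that $\mathsf{H}^*=\Theta\mathsf{H}\Theta^{-1}$; any such $\Theta$ is called a metric (operator) for $\mathsf{H}$. A sequence $\{\psi_n\}$ is a basis if every vector has a unique norm-convergent expansion $\sum c_n\psi_n$. Simple spectrum means every eigenvalue has geometric and algebraic multiplicity one; discrete spectrum means compact resolvent. *)

From HB Require Import structures.
From mathcomp Require Import all_boot all_order all_algebra.
From mathcomp Require Import reals.
From mathcomp Require Import complex.
Set Implicit Arguments.
Unset Strict Implicit.
Unset Printing Implicit Defensive.
Import Order.TTheory GRing.Theory Num.Theory.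
Local Open Scope ring_scope.

Section HilbertDefs.
Variables (R : realType) (V : lmodType R[i]) (ip : V -> V -> R[i]).

Definition nrm (x : V) : R := Num.sqrt (complex.Re (ip x x)).

Definition rlim (u : nat -> R) (l : R) : Prop :=
  forall e : R, 0 < e -> exists N : nat, forall n : nat, (N <= n)%N -> `|u n - l| < e.

Definition summable (u : nat -> R) : Prop :=
  exists l : R, rlim (fun n => \sum_(k < n) u k) l.

Definition vlim (u : nat -> V) (x : V) : Prop := rlim (fun n => nrm (u n - x)) 0.

Definition vseries (w : nat -> V) (x : V) : Prop :=
  vlim (fun n => \sum_(k < n) w k) x.

Definition inner_product : Prop :=
  [/\ (forall x y z : V, forall a : R[i], ip x (a *: y + z) = a * ip x y + ip x z),
      (forall x y : V, ip x y = (ip y x)^*),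
      (forall x : V, 0 <= ip x x) &
      (forall x : V, ip x x = 0 -> x = 0)].

Definition cauchy_seq (u : nat -> V) : Prop :=
  forall e : R, 0 < e -> exists N : nat,
    forall m n : nat, (N <= m)%N -> (N <= n)%N -> nrm (u m - u n) < e.

Definition complete_space : Prop :=
  forall u : nat -> V, cauchy_seq u -> exists x : V, vlim u x.

Definition separable_space : Prop :=
  exists d : nat -> V, forall (x : V) (e : R), 0 < e -> exists n : nat, nrm (x - d n) < e.

Definition infinite_dimensional : Prop :=
  forall n : nat, exists f : nat -> V, forall c : nat -> R[i],
    \sum_(k < n) c k *: f k = 0 -> forall k : nat, (k < n)%N -> c k = 0.

Definition separable_inf_dim_hilbert : Prop :=
  [/\ inner_product, complete_space, separable_space & infinite_dimensional].

Definition is_basis (psi : nat -> V) : Prop :=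
  forall x : V, exists c : nat -> R[i],
    vseries (fun k => c k *: psi k) x /\
    forall c' : nat -> R[i], vseries (fun k => c' k *: psi k) x -> c' = c.

Definition orthonormal (chi : nat -> V) : Prop :=
  forall m n : nat, ip (chi m) (chi n) = (m == n)%:R.

Definition orthonormal_basis (chi : nat -> V) : Prop :=
  orthonormal chi /\ is_basis chi.

Definition bounded_op (T : V -> V) : Prop :=
  (forall (a : R[i]) (x y : V), T (a *: x + y) = a *: T x + T y) /\
  exists M : R, forall x : V, nrm (T x) <= M * nrm x.

Definition bounded_selfadjoint (T : V -> V) : Prop :=
  bounded_op T /\ forall x y : V, ip (T x) y = ip x (T y).

Definition nonnegative_op (T : V -> V) : Prop := forall x : V, 0 <= ip x (T x).

Definition has_bounded_inverse (T : V -> V) : Prop :=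
  exists Ti : V -> V, [/\ bounded_op Ti, cancel T Ti & cancel Ti T].

Definition compact_op (K : V -> V) : Prop :=
  bounded_op K /\
  forall u : nat -> V, (exists M : R, forall n, nrm (u n) <= M) ->
    exists (s : nat -> nat) (y : V),
      (forall n, (s n < s n.+1)%N) /\ vlim (fun n => K (u (s n))) y.

Definition hilbert_schmidt (T : V -> V) : Prop :=
  bounded_op T /\
  exists e : nat -> V, orthonormal_basis e /\ summable (fun n => nrm (T (e n)) ^+ 2).

Record op := Op { dom : V -> Prop ; act : V -> V }.

Definition linear_op (H : op) : Prop :=
  dom H 0 /\
  forall (a : R[i]) (x y : V), dom H x -> dom H y ->
    dom H (a *: x + y) /\ act H (a *: x + y) = a *: act H x + act H y.

Definition densely_defined (H : op) : Prop :=
  linear_op H /\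
  forall x : V, exists u : nat -> V, (forall n, dom H (u n)) /\ vlim u x.

(* Hs is the adjoint H^* of H (inner product linear in the 2nd entry):
   dom H^* = { y | exists z, forall x in dom H, <Hx, y> = <x, z> },
   <Hx, y> = <x, H^* y>. *)
Definition is_adjoint (H Hs : op) : Prop :=
  (forall y : V, dom Hs y <->
     exists z : V, forall x : V, dom H x -> ip (act H x) y = ip x z) /\
  (forall x y : V, dom H x -> dom Hs y -> ip (act H x) y = ip x (act Hs y)).

Definition is_metric (H Hs : op) (Theta : V -> V) : Prop :=
  bounded_selfadjoint Theta /\ nonnegative_op Theta /\
  exists Ti : V -> V, [/\ bounded_op Ti, cancel Theta Ti, cancel Ti Theta,
    (forall y : V, dom Hs y <-> dom H (Ti y)) &
    (forall y : V, dom Hs y -> act Hs y = Theta (act H (Ti y)))].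

Definition quasi_self_adjoint (H Hs : op) : Prop :=
  densely_defined H /\ is_adjoint H Hs /\ exists Theta : V -> V, is_metric H Hs Theta.

Definition is_resolvent (H : op) (lam : R[i]) (Rl : V -> V) : Prop :=
  [/\ bounded_op Rl,
      (forall x : V, dom H (Rl x) /\ act H (Rl x) - lam *: Rl x = x) &
      (forall y : V, dom H y -> Rl (act H y - lam *: y) = y)].

Definition in_spectrum (H : op) (lam : R[i]) : Prop :=
  ~ exists Rl : V -> V, is_resolvent H lam Rl.

Definition eigenvector (H : op) (lam : R[i]) (x : V) : Prop :=
  [/\ dom H x, x <> 0 & act H x = lam *: x].

Definition eigenvalue (H : op) (lam : R[i]) : Prop := exists x : V, eigenvector H lam x.

Definition purely_real_spectrum (H : op) : Prop :=
  forall lam : R[i], in_spectrum H lam -> lam \is Num.real.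

(* discrete spectrum = compact resolvent *)
Definition discrete_spectrum (H : op) : Prop :=
  exists (lam : R[i]) (Rl : V -> V), is_resolvent H lam Rl /\ compact_op Rl.

(* every eigenvalue has geometric multiplicity one (eigenvectors are
   proportional) and algebraic multiplicity one
   (ker (H - lam)^2 = ker (H - lam), i.e. no Jordan chains) *)
Definition simple_spectrum (H : op) : Prop :=
  forall lam : R[i], eigenvalue H lam ->
    (forall x y : V, eigenvector H lam x -> eigenvector H lam y ->
       exists c : R[i], y = c *: x) /\
    (forall x : V, dom H x -> dom H (act H x - lam *: x) ->
       act H (act H x - lam *: x) - lam *: (act H x - lam *: x) = 0 ->
       act H x = lam *: x).

End HilbertDefs.

(* Write d_k = psi_k - chi_k, so that sum ||d_k||^2 < oo. Biorthogonality collapses the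
   series defining Theta on psi_m to Theta psi_m = C_m phi_m; hence
   <psi_m, (I - Theta) psi_m> = ||psi_m||^2 - C_m and C_m <phi_m, y> = <psi_m, Theta y>.
   Being quadratically close to chi, psi is a Bessel sequence; by the last identity so is
   phi, and then sum_m ||phi_m - chi_m||^2 = sum_{m,k} |<phi_m, d_k>|^2 < oo.
   If C_m - 1 is square summable, (I - Theta) chi_m = (chi_m - phi_m) + Theta d_m
   - (C_m - 1) phi_m is square summable, so I - Theta is Hilbert-Schmidt in the basis chi.
   Conversely, by self-adjointness the Hilbert-Schmidt sum in any orthonormal basis bounds
   sum_m ||(I - Theta) chi_m||^2, and C_m - 1 = (||psi_m||^2 - 1) - <psi_m, (I - Theta) psi_m>
   is controlled by ||d_m||^2 and ||(I - Theta) chi_m||^2. *)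

From Pilot Require Import Defs.
From HB Require Import structures.
From mathcomp Require Import all_boot all_order all_algebra.
From mathcomp Require Import classical_sets reals complex.
From mathcomp.algebra_tactics Require Import ring lra.
Set Implicit Arguments.
Unset Strict Implicit.
Unset Printing Implicit Defensive.
Import Order.TTheory GRing.Theory Num.Theory.
Local Open Scope ring_scope.

Section ComplexModulus.
Variable R : realType.

Definition normc2 (z : R[i]) : R := complex.Re z ^+ 2 + complex.Im z ^+ 2.

(* The conjugation of the inner-product axioms is [Num.conj], which is [conjc] only up to
   conversion; rewriting with [conjCE] makes the lemmas of complex.v applicable. *)
Lemma conjCE (z : R[i]) : z^* = conjc z.
Proof. by []. Qed.

Lemma normc2_ge0 z : 0 <= normc2 z.
Proof. by rewrite addr_ge0 ?sqr_ge0. Qed.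

Lemma normc2M a b : normc2 (a * b) = normc2 a * normc2 b.
Proof. case: a => a1 a2; case: b => b1 b2; rewrite /normc2 /=; ring. Qed.

Lemma normc2J z : normc2 z^* = normc2 z.
Proof. by rewrite conjCE; case: z => a b; rewrite /normc2 /=; ring. Qed.

Lemma normc2N z : normc2 (- z) = normc2 z.
Proof. case: z => a b; rewrite /normc2 /=; ring. Qed.

Lemma normc2_real (r : R) : normc2 r%:C%C = r ^+ 2.
Proof. rewrite /normc2 /=; ring. Qed.

Lemma Re_mulcJ z : complex.Re (z * z^*) = normc2 z.
Proof. rewrite conjCE; case: z => a b; rewrite /normc2 /=; ring. Qed.

Lemma sqr_Re_le_normc2 z : complex.Re z ^+ 2 <= normc2 z.
Proof. by rewrite lerDl sqr_ge0. Qed.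

Lemma normc2D_le a b : normc2 (a + b) <= 2 * normc2 a + 2 * normc2 b.
Proof.
case: a => a1 a2; case: b => b1 b2; rewrite /normc2 /=.
have := sqr_ge0 (a1 - b1); have := sqr_ge0 (a2 - b2); nra.
Qed.

Lemma normc2B_le a b : normc2 (a - b) <= 2 * normc2 a + 2 * normc2 b.
Proof. by rewrite -(normc2N b) normc2D_le. Qed.

End ComplexModulus.

Section InnerProduct.
Variables (R : realType) (V : lmodType R[i]) (ip : V -> V -> R[i]).
Hypothesis Hip : inner_product ip.

Lemma ipDZr x a y z : ip x (a *: y + z) = a * ip x y + ip x z.
Proof. by case: Hip. Qed.

Lemma ipC x y : ip x y = (ip y x)^*.
Proof. by case: Hip. Qed.

Lemma ip0r x : ip x 0 = 0.
Proof.
have := ipDZr x 1 0 0; rewrite scale1r addr0 mul1r => h.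
by apply: (@addrI _ (ip x 0)); rewrite addr0 -h.
Qed.

Lemma ipZr x a y : ip x (a *: y) = a * ip x y.
Proof. by rewrite -[a *: y]addr0 ipDZr ip0r addr0. Qed.

Lemma ipDr x y z : ip x (y + z) = ip x y + ip x z.
Proof. by have := ipDZr x 1 y z; rewrite scale1r mul1r. Qed.

Lemma ipNr x y : ip x (- y) = - ip x y.
Proof. by rewrite -scaleN1r ipZr mulN1r. Qed.

Lemma ipBr x y z : ip x (y - z) = ip x y - ip x z.
Proof. by rewrite ipDr ipNr. Qed.

Lemma ip0l x : ip 0 x = 0.
Proof. by rewrite ipC ip0r conjC0. Qed.

Lemma ipZl x a y : ip (a *: y) x = a^* * ip y x.
Proof. by rewrite [LHS]ipC ipZr rmorphM [ip y x]ipC. Qed.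

Lemma ipDl x y z : ip (y + z) x = ip y x + ip z x.
Proof. by rewrite [LHS]ipC ipDr rmorphD [ip y x]ipC [ip z x]ipC. Qed.

Lemma ipNl x y : ip (- y) x = - ip y x.
Proof. by rewrite [LHS]ipC ipNr rmorphN [ip y x]ipC. Qed.

Lemma ipBl x y z : ip (y - z) x = ip y x - ip z x.
Proof. by rewrite ipDl ipNl. Qed.

Lemma ip_sumr x n (F : 'I_n -> V) : ip x (\sum_(k < n) F k) = \sum_(k < n) ip x (F k).
Proof. by elim/big_rec2: _ => [|k y1 y2 _ <-]; rewrite ?ip0r ?ipDr. Qed.

Definition sqnorm x : R := complex.Re (ip x x).

Lemma ip_self x : ip x x = (sqnorm x)%:C%C.
Proof.
case: Hip => _ _ /(_ x) + _; rewrite /sqnorm; case: (ip x x) => a b.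
by rewrite lecE /= => /andP [/eqP -> _].
Qed.

Lemma sqnorm_ge0 x : 0 <= sqnorm x.
Proof. by case: Hip => _ _ /(_ x); rewrite ip_self ler0c. Qed.

Lemma sqnorm_eq0 x : sqnorm x = 0 -> x = 0.
Proof. by case: Hip => _ _ _ ip_eq0 sx0; apply: ip_eq0; rewrite ip_self sx0. Qed.

Lemma sqnormD x y : sqnorm (x + y) = sqnorm x + sqnorm y + 2 * complex.Re (ip x y).
Proof. by rewrite /sqnorm ipDl !ipDr [ip y x]ipC !raddfD /=; case: (ip x y) => a b /=; ring. Qed.

Lemma sqnormZ a x : sqnorm (a *: x) = normc2 a * sqnorm x.
Proof. by rewrite /sqnorm ipZl ipZr ip_self; case: a => a1 a2 /=; rewrite /normc2 /=; ring. Qed.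

Lemma sqnormN x : sqnorm (- x) = sqnorm x.
Proof. by rewrite /sqnorm ipNl ipNr opprK. Qed.

Lemma sqnormD_le x y : sqnorm (x + y) <= 2 * sqnorm x + 2 * sqnorm y.
Proof.
have := sqnormD x (- y); rewrite sqnormN ipNr raddfN /=.
have := sqnormD x y; have := sqnorm_ge0 (x - y); lra.
Qed.

Lemma sqnormB_le x y : sqnorm (x - y) <= 2 * sqnorm x + 2 * sqnorm y.
Proof. by rewrite -(sqnormN y) sqnormD_le. Qed.

Lemma nrm_ge0 x : 0 <= nrm ip x.
Proof. exact: sqrtr_ge0. Qed.

Lemma nrm_sqr x : nrm ip x ^+ 2 = sqnorm x.
Proof. by rewrite /nrm sqr_sqrtr // sqnorm_ge0. Qed.

Lemma normc2_ip_le x y : normc2 (ip x y) <= sqnorm x * sqnorm y.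
Proof.
have [x0|x0] := eqVneq (sqnorm x) 0.
  by rewrite x0 mul0r (sqnorm_eq0 x0) ip0l /normc2 /= expr0n addr0.
have sx_gt0 : 0 < sqnorm x by rewrite lt_def x0 sqnorm_ge0.
(* Cauchy-Schwarz, from the positivity of ||<x,x> y - <x,y> x||^2. *)
have := sqnorm_ge0 ((sqnorm x)%:C%C *: y + (- ip x y) *: x).
rewrite sqnormD !sqnormZ normc2_real normc2N ipZl ipZr (conjCE (_%:C%C)) conjc_real.
have -> : complex.Re ((sqnorm x)%:C%C * (- ip x y * ip y x)) = - (sqnorm x * normc2 (ip x y)).
  by rewrite [ip y x]ipC -Re_mulcJ; case: (ip x y) => a b /=; ring.
move=> h; have : 0 <= sqnorm x * (sqnorm x * sqnorm y - normc2 (ip x y)) by lra.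
by rewrite pmulr_rge0 // subr_ge0.
Qed.

Lemma vlim_eventually (u : nat -> V) x y N0 :
  vlim ip u x -> (forall n, (N0 <= n)%N -> u n = y) -> x = y.
Proof.
move=> ux uy; apply/eqP; rewrite -subr_eq0; apply/eqP/sqnorm_eq0.
apply/eqP; rewrite eq_le sqnorm_ge0 andbT; apply/ler_addgt0Pr => eps eps0.
have s0 : 0 < Num.sqrt eps by rewrite sqrtr_gt0.
have [N hN] := ux _ s0.
have := hN _ (leq_maxl N N0); rewrite uy ?leq_maxr // subr0 ger0_norm ?sqrtr_ge0 //.
rewrite /nrm ltr_sqrt // => /ltW; rewrite -[y - x]opprB.
by rewrite -/(sqnorm _) sqnormN add0r.
Qed.

End InnerProduct.

Lemma sum_ord_eq_nat (W : nmodType) N (F : nat -> W) k : (k < N)%N ->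
  \sum_(j < N) (if j == k :> nat then F j else 0) = F k.
Proof. by move=> kN; rewrite -big_mkcond big_ord1_eq kN. Qed.

Section RealSeries.
Variable R : realType.
Implicit Types (u v : nat -> R).

Definition bounded_psum u := exists B : R, forall N, \sum_(k < N) u k <= B.

Lemma eq_rlim u v l : u =1 v -> rlim u l -> rlim v l.
Proof. by move=> uv ul e e0; have [N hN] := ul e e0; exists N => n /hN; rewrite uv. Qed.

Lemma rlimD u v a b : rlim u a -> rlim v b -> rlim (fun n => u n + v n) (a + b).
Proof.
move=> ua vb e e0; have e2 : 0 < e / 2 by rewrite divr_gt0.
have [N1 h1] := ua _ e2; have [N2 h2] := vb _ e2.
exists (maxn N1 N2) => n; rewrite geq_max => /andP [/h1 lt1 /h2 lt2].
rewrite opprD addrACA; apply: le_lt_trans (ler_normD _ _) _.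
by rewrite [e]splitr ltrD.
Qed.

Lemma rlim_sum M (F : nat -> nat -> R) (l : nat -> R) :
  (forall m, rlim (F m) (l m)) ->
  rlim (fun n => \sum_(m < M) F m n) (\sum_(m < M) l m).
Proof.
move=> Fl; elim: M => [|M IH].
  by move=> e e0; exists 0%N => n _; rewrite !big_ord0 subrr normr0.
rewrite big_ord_recr; apply: eq_rlim (rlimD IH (Fl M)) => n.
by rewrite big_ord_recr.
Qed.

Lemma rlim_le u l B : rlim u l -> (forall n, u n <= B) -> l <= B.
Proof.
move=> ul uB; rewrite leNgt; apply/negP => Bl.
have [N hN] := ul (l - B) (ltac:(by rewrite subr_gt0)).
have := hN N (leqnn N); have := uB N; have := ler_norm (l - u N).
rewrite distrC; lra.
Qed.

Lemma eq_summable u v : u =1 v -> summable u -> summable v.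
Proof. by move=> uv [l ul]; exists l; apply: eq_rlim ul => n; apply: eq_bigr. Qed.

Section Nonnegative.
Variable u : nat -> R.
Hypothesis u_ge0 : forall n, 0 <= u n.

Lemma le_psum m n : (m <= n)%N -> \sum_(k < m) u k <= \sum_(k < n) u k.
Proof.
move=> /subnK <-; elim: (n - m)%N => [|j IH]; first by rewrite add0n.
by rewrite addSn big_ord_recr /= (le_trans IH) // lerDl.
Qed.

Lemma term_le_psum_bound B m : (forall N, \sum_(k < N) u k <= B) -> u m <= B.
Proof.
move=> uB; apply: le_trans (uB m.+1); rewrite big_ord_recr /= lerDr.
exact: sumr_ge0.
Qed.

Lemma summable_bounded_psum : summable u -> bounded_psum u.
Proof.
move=> [l ul]; exists l => N; rewrite leNgt; apply/negP => lt_l.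
have [N1 hN1] := ul (\sum_(k < N) u k - l) (ltac:(by rewrite subr_gt0)).
have := hN1 _ (leq_maxr N N1); have := le_psum (leq_maxl N N1).
have := ler_norm (\sum_(k < maxn N N1) u k - l); lra.
Qed.

Lemma bounded_psum_summable : bounded_psum u -> summable u.
Proof.
move=> [B uB]; pose E := fun x : R => exists N, x = \sum_(k < N) u k.
have supE : has_sup E by split; [exists 0, 0%N; rewrite big_ord0 | exists B => _ [N ->]].
exists (sup E) => e e0; have [_ [N ->] lt_sup] := sup_adherent e0 supE.
exists N => n Nn; have := le_psum Nn.
have : \sum_(k < n) u k <= sup E by apply: sup_upper_bound => //; exists n.
by move=> le_sup le_n; rewrite ler0_norm ?subr_le0 //; lra.
Qed.

End Nonnegative.

Lemma bounded_psumD u v :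
  bounded_psum u -> bounded_psum v -> bounded_psum (fun n => u n + v n).
Proof.
by move=> [A uA] [B vB]; exists (A + B) => N; rewrite big_split lerD.
Qed.

Lemma bounded_psumZ c u : 0 <= c -> bounded_psum u -> bounded_psum (fun n => c * u n).
Proof. by move=> c0 [B uB]; exists (c * B) => N; rewrite -mulr_sumr ler_wpM2l. Qed.

Lemma bounded_psum_le u v : (forall n, u n <= v n) -> bounded_psum v -> bounded_psum u.
Proof. by move=> uv [B vB]; exists B => N; apply: le_trans (vB N); apply: ler_sum. Qed.

End RealSeries.

Section Orthonormal.
Variables (R : realType) (V : lmodType R[i]) (ip : V -> V -> R[i]).
Hypothesis Hip : inner_product ip.
Variable e : nat -> V.
Hypothesis e_on : Defs.orthonormal ip e.

Lemma ip_orthonormal_comb N (c : nat -> R[i]) k : (k < N)%N ->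
  ip (e k) (\sum_(j < N) c j *: e j) = c k.
Proof.
move=> kN; rewrite ip_sumr // -(sum_ord_eq_nat c kN); apply: eq_bigr => j _.
by rewrite ipZr // e_on eq_sym mulr_natr mulrb.
Qed.

Definition fourier_proj N x := \sum_(k < N) ip (e k) x *: e k.

Lemma ip_sub_fourier_proj N x (c : nat -> R[i]) :
  ip (x - fourier_proj N x) (\sum_(k < N) c k *: e k) = 0.
Proof.
rewrite ip_sumr // big1 // => k _; rewrite ipZr // ipBl // [ip x _]ipC //.
rewrite [ip (fourier_proj N x) _]ipC // /fourier_proj.
by rewrite (ip_orthonormal_comb (fun j => ip (e j) x)) // subrr mulr0.
Qed.

Lemma sqnorm_fourier_proj N x :
  sqnorm ip x = \sum_(k < N) normc2 (ip (e k) x) + sqnorm ip (x - fourier_proj N x).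
Proof.
rewrite -[in LHS](subrK (fourier_proj N x) x) (sqnormD Hip (x - _)).
have -> : ip (x - fourier_proj N x) (fourier_proj N x) = 0.
  exact: (ip_sub_fourier_proj N x (fun k => ip (e k) x)).
rewrite /= mulr0 addr0 addrC; congr (_ + _).
rewrite /sqnorm {2}/fourier_proj ip_sumr // raddf_sum; apply: eq_bigr => k _.
rewrite ipZr // [ip _ (e k)]ipC // (ip_orthonormal_comb (fun j => ip (e j) x)) //=.
exact: Re_mulcJ.
Qed.

Lemma bessel N x : \sum_(k < N) normc2 (ip (e k) x) <= sqnorm ip x.
Proof. by rewrite (sqnorm_fourier_proj N x) lerDl sqnorm_ge0. Qed.

Lemma parseval x : is_basis ip e ->
  rlim (fun N => \sum_(k < N) normc2 (ip (e k) x)) (sqnorm ip x).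
Proof.
move=> /(_ x) [c [cx _]] eps eps0.
have [N hN] := cx _ (ltac:(by rewrite sqrtr_gt0) : 0 < Num.sqrt eps).
exists N => n /hN; rewrite subr0 ger0_norm ?sqrtr_ge0 // /nrm ltr_sqrt // -/(sqnorm ip _).
set s := \sum_(k < n) c k *: e k; set r := x - fourier_proj n x.
set D := \sum_(k < n) (c k - ip (e k) x) *: e k.
have rD : ip r D = 0 := ip_sub_fourier_proj n x (fun k => c k - ip (e k) x).
have -> : s - x = - r + D.
  rewrite opprB addrAC /s /D /fourier_proj -big_split /=; congr (_ - _).
  by apply: eq_bigr => k _; rewrite -scalerDl addrC subrK.
rewrite sqnormD // ipNl // rD oppr0 /= mulr0 addr0 sqnormN //.
have := sqnorm_fourier_proj n x; have := sqnorm_ge0 Hip r; have := sqnorm_ge0 Hip D.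
by move=> *; rewrite ler0_norm; lra.
Qed.

End Orthonormal.

Section BoundedOperator.
Variables (R : realType) (V : lmodType R[i]) (ip : V -> V -> R[i]).
Hypothesis Hip : inner_product ip.
Variables (A : V -> V) (M : R).
Hypothesis A_lin : forall (a : R[i]) (x y : V), A (a *: x + y) = a *: A x + A y.
Hypothesis A_le : forall x, nrm ip (A x) <= M * nrm ip x.

Lemma linB x y : A (x - y) = A x - A y.
Proof. by rewrite addrC -scaleN1r A_lin scaleN1r addrC. Qed.

Lemma sqnorm_bounded_le x : sqnorm ip (A x) <= M ^+ 2 * sqnorm ip x.
Proof.
rewrite -!nrm_sqr // -exprMn; have := A_le x; have := nrm_ge0 ip (A x); nra.
Qed.

Lemma sqnorm_id_sub_le x : sqnorm ip (x - A x) <= (2 + 2 * M ^+ 2) * sqnorm ip x.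
Proof. by have := sqnormB_le Hip x (A x); have := sqnorm_bounded_le x; lra. Qed.

Lemma bounded_op_id_sub : bounded_op ip (fun x => x - A x).
Proof.
split=> [a x y|]; first by rewrite A_lin scalerBr opprD addrACA.
exists (Num.sqrt (2 + 2 * M ^+ 2)) => x.
have K0 : 0 <= 2 + 2 * M ^+ 2 by have := sqr_ge0 M; lra.
by rewrite /nrm -sqrtrM //; apply: ler_wsqrtr; apply: sqnorm_id_sub_le.
Qed.

End BoundedOperator.

Section HilbertSchmidtBasis.
Variables (R : realType) (V : lmodType R[i]) (ip : V -> V -> R[i]).
Hypothesis Hip : inner_product ip.
Variable A : V -> V.
Hypothesis A_sa : forall x y, ip (A x) y = ip x (A y).
Variables (e f : nat -> V).
Hypothesis e_onb : orthonormal_basis ip e.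
Hypothesis f_on : Defs.orthonormal ip f.

Lemma hs_psum_basis_le B : (forall N, \sum_(n < N) sqnorm ip (A (e n)) <= B) ->
  forall N, \sum_(m < N) sqnorm ip (A (f m)) <= B.
Proof.
move=> eB N; case: e_onb => e_on e_basis.
have lim m : rlim (fun K => \sum_(n < K) normc2 (ip (f m) (A (e n)))) (sqnorm ip (A (f m))).
  apply: eq_rlim (parseval Hip e_on _ e_basis) => K; apply: eq_bigr => n _.
  by rewrite -A_sa ipC // normc2J.
apply: rlim_le (rlim_sum N lim) _ => K; rewrite exchange_big /=.
apply: le_trans (eB K); apply: ler_sum => n _; exact: bessel.
Qed.

End HilbertSchmidtBasis.

Section QuadraticallyClose.
Variables (R : realType) (V : lmodType R[i]) (ip : V -> V -> R[i]).
Hypothesis Hip : inner_product ip.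
Variables (psi chi : nat -> V) (S : R).
Hypothesis chi_on : Defs.orthonormal ip chi.
Hypothesis psi_close : forall N, \sum_(k < N) sqnorm ip (psi k - chi k) <= S.

Lemma close_bessel z N :
  \sum_(m < N) normc2 (ip (psi m) z) <= (2 + 2 * S) * sqnorm ip z.
Proof.
have term m : normc2 (ip (psi m) z) <=
    2 * normc2 (ip (chi m) z) + 2 * (sqnorm ip (psi m - chi m) * sqnorm ip z).
  rewrite -{1}[psi m](subrK (chi m)) ipDl // addrC.
  have := normc2_ip_le Hip (psi m - chi m) z.
  by have := normc2D_le (ip (chi m) z) (ip (psi m - chi m) z); lra.
apply: le_trans; first by apply: ler_sum => m _; exact: term.
rewrite big_split /= -!mulr_sumr -mulr_suml.
have := bessel Hip chi_on N z; have := psi_close N; have := sqnorm_ge0 Hip z; nra.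
Qed.

Variable phi : nat -> V.
Hypothesis chi_basis : is_basis ip chi.
Hypothesis biorth : forall m n, ip (psi m) (phi n) = (n == m)%:R.
Variable B : R.
Hypothesis B_ge0 : 0 <= B.
Hypothesis phi_bessel : forall y N, \sum_(m < N) normc2 (ip (phi m) y) <= B * sqnorm ip y.

Lemma biorth_close N : \sum_(m < N) sqnorm ip (phi m - chi m) <= B * S.
Proof.
(* [<chi k, phi m - chi m> = <chi k - psi k, phi m>] by biorthogonality. *)
have lim m : rlim (fun K => \sum_(k < K) normc2 (ip (phi m) (psi k - chi k)))
                  (sqnorm ip (phi m - chi m)).
  apply: eq_rlim (parseval Hip chi_on _ chi_basis) => K; apply: eq_bigr => k _.
  rewrite ipBr // chi_on eq_sym -biorth -ipBl // -[chi k - psi k]opprB ipNl // normc2N.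
  by rewrite [ip _ (phi m)]ipC // normc2J.
apply: rlim_le (rlim_sum N lim) _ => K; rewrite exchange_big /=.
apply: le_trans; first by apply: ler_sum => k _; exact: phi_bessel.
by rewrite -mulr_sumr; apply: ler_wpM2l (psi_close K).
Qed.

End QuadraticallyClose.

Lemma biorth_series_psi (R : realType) (V : lmodType R[i]) (ip : V -> V -> R[i])
    (psi phi : nat -> V) (c : nat -> R[i]) m y :
  inner_product ip -> (forall m n, ip (psi m) (phi n) = (n == m)%:R) ->
  vseries ip (fun n => c n * ip (phi n) (psi m) *: phi n) y -> y = c m *: phi m.
Proof.
move=> Hip biorth /(vlim_eventually Hip (N0 := m.+1)); apply=> n mn.
rewrite -(sum_ord_eq_nat (fun k => c k *: phi k) mn); apply: eq_bigr => k _.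
rewrite [ip (phi k) _]ipC // biorth conjC_nat mulr_natr mulrb.
by case: (k == m :> nat); rewrite ?scale0r.
Qed.

Section Metric.
Variables (R : realType) (V : lmodType R[i]) (ip : V -> V -> R[i]).
Hypothesis Hip : inner_product ip.
Variables (psi chi phi : nat -> V) (Theta : V -> V) (C : nat -> R) (Cm M S : R).
Hypothesis chi_onb : orthonormal_basis ip chi.
Hypothesis biorth : forall m n, ip (psi m) (phi n) = (n == m)%:R.
Hypothesis phi_norm : forall n, nrm ip (phi n) = 1.
Hypothesis Theta_lin : forall (a : R[i]) (x y : V), Theta (a *: x + y) = a *: Theta x + Theta y.
Hypothesis Theta_le : forall x, nrm ip (Theta x) <= M * nrm ip x.
Hypothesis Theta_sa : forall x y, ip (Theta x) y = ip x (Theta y).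
Hypothesis Theta_psi : forall m, Theta (psi m) = (C m)%:C%C *: phi m.
Hypothesis Cm_gt0 : 0 < Cm.
Hypothesis Cm_le : forall n, Cm <= C n.
Hypothesis psi_close : forall N, \sum_(k < N) sqnorm ip (psi k - chi k) <= S.

Local Notation T x := (x - Theta x).

Let chi_on : Defs.orthonormal ip chi := proj1 chi_onb.

Lemma sqnorm_chi m : sqnorm ip (chi m) = 1.
Proof. by rewrite /sqnorm chi_on eqxx. Qed.

Lemma sqnorm_phi m : sqnorm ip (phi m) = 1.
Proof. by rewrite -nrm_sqr // phi_norm expr1n. Qed.

Lemma S_ge0 : 0 <= S.
Proof. by apply: le_trans (psi_close 0); rewrite big_ord0. Qed.

Lemma sqnorm_close_le m : sqnorm ip (psi m - chi m) <= S.
Proof. exact: (term_le_psum_bound (fun k => sqnorm_ge0 Hip (psi k - chi k)) _ psi_close). Qed.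

Lemma sqnorm_psi_le m : sqnorm ip (psi m) <= 2 + 2 * S.
Proof.
rewrite -(subrK (chi m) (psi m)); apply: le_trans (sqnormD_le Hip _ _) _.
by rewrite sqnorm_chi; have := sqnorm_close_le m; lra.
Qed.

Lemma id_sub_Theta_sa x y : ip (T x) y = ip x (T y).
Proof. by rewrite ipBl // ipBr // Theta_sa. Qed.

Lemma C_ip_phi m y : (C m)%:C%C * ip (phi m) y = ip (psi m) (Theta y).
Proof. by rewrite -Theta_sa Theta_psi ipZl // (conjCE (_%:C%C)) conjc_real. Qed.

Lemma phi_bessel y N :
  \sum_(m < N) normc2 (ip (phi m) y) <= (2 + 2 * S) * M ^+ 2 / Cm ^+ 2 * sqnorm ip y.
Proof.
rewrite mulrAC ler_pdivlMr ?exprn_gt0 // mulr_suml.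
apply: (@le_trans _ _ (\sum_(m < N) normc2 (ip (psi m) (Theta y)))).
  apply: ler_sum => m _; rewrite -C_ip_phi normc2M normc2_real mulrC.
  have le_sq : Cm ^+ 2 <= C m ^+ 2 by have := Cm_le m; have := Cm_gt0; nra.
  by have := normc2_ge0 (ip (phi m) y); nra.
apply: le_trans (close_bessel Hip chi_on psi_close _ _) _.
rewrite -mulrA ler_wpM2l ?sqnorm_bounded_le //.
by have := S_ge0; lra.
Qed.

Lemma phi_chi_close N :
  \sum_(m < N) sqnorm ip (phi m - chi m) <= (2 + 2 * S) * M ^+ 2 / Cm ^+ 2 * S.
Proof.
apply: (biorth_close Hip chi_on psi_close (proj2 chi_onb) biorth _ phi_bessel).
apply: mulr_ge0; last by rewrite invr_ge0 sqr_ge0.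
by rewrite mulr_ge0 ?sqr_ge0 //; have := S_ge0; lra.
Qed.

Lemma sqnorm_T_chi_le m : sqnorm ip (T (chi m)) <=
  2 * sqnorm ip (phi m - chi m) + 4 * M ^+ 2 * sqnorm ip (psi m - chi m) + 4 * (C m - 1) ^+ 2.
Proof.
set c := (C m)%:C%C.
have c1 : (C m - 1)%:C%C = c - 1 by rewrite rmorphB rmorph1.
(* [Theta chi = C phi - Theta (psi - chi)] *)
have -> : T (chi m) = (chi m - phi m) + (Theta (psi m - chi m) - (c - 1) *: phi m).
  rewrite (linB Theta_lin) Theta_psi scalerBl scale1r.
  have -> : c *: phi m - Theta (chi m) - (c *: phi m - phi m) = phi m - Theta (chi m).
    by rewrite opprB addrC addrA subrK.
  by rewrite addrA subrK.
apply: le_trans (sqnormD_le Hip _ _) _.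
have := sqnormB_le Hip (Theta (psi m - chi m)) ((c - 1) *: phi m).
rewrite sqnormZ // -c1 normc2_real sqnorm_phi mulr1.
have := sqnorm_bounded_le Hip Theta_le (psi m - chi m).
have -> : sqnorm ip (chi m - phi m) = sqnorm ip (phi m - chi m).
  by rewrite -[chi m - phi m]opprB sqnormN.
lra.
Qed.

Lemma sqr_sqnorm_psi_sub1_le m :
  (sqnorm ip (psi m) - 1) ^+ 2 <= (2 * S + 8) * sqnorm ip (psi m - chi m).
Proof.
set s := sqnorm ip (psi m - chi m); set r := complex.Re (ip (chi m) (psi m - chi m)).
have -> : sqnorm ip (psi m) = 1 + s + 2 * r.
  by rewrite -{1}(subrK (chi m) (psi m)) addrC sqnormD // sqnorm_chi.
have r2 : r ^+ 2 <= s.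
  apply: le_trans (sqr_Re_le_normc2 _) _.
  by apply: le_trans (normc2_ip_le Hip _ _) _; rewrite sqnorm_chi mul1r.
have := sqnorm_close_le m; have := sqnorm_ge0 Hip (psi m - chi m); rewrite -/s => s0 sS.
have := sqr_ge0 (s - 2 * r); have := mulr_ge0 s0 (ltac:(by rewrite subr_ge0) : 0 <= S - s).
nra.
Qed.

Lemma normc2_ip_psi_T_le m : normc2 (ip (psi m) (T (psi m))) <=
  2 * (2 + 2 * S) * sqnorm ip (T (chi m))
  + 2 * (2 + 2 * M ^+ 2) * (2 + 2 * S) * sqnorm ip (psi m - chi m).
Proof.
rewrite -{1}(subrK (chi m) (psi m)) ipDl // addrC.
apply: le_trans (normc2D_le _ _) _.
have h1 : normc2 (ip (chi m) (T (psi m))) <= sqnorm ip (T (chi m)) * (2 + 2 * S).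
  rewrite -id_sub_Theta_sa; apply: le_trans (normc2_ip_le Hip _ _) _.
  by apply: ler_wpM2l; [exact: sqnorm_ge0 | exact: sqnorm_psi_le].
have h2 : normc2 (ip (psi m - chi m) (T (psi m))) <=
    sqnorm ip (psi m - chi m) * ((2 + 2 * M ^+ 2) * (2 + 2 * S)).
  apply: le_trans (normc2_ip_le Hip _ _) _; apply: ler_wpM2l; first exact: sqnorm_ge0.
  apply: le_trans (sqnorm_id_sub_le Hip Theta_le _) _.
  by apply: ler_wpM2l (sqnorm_psi_le m); have := sqr_ge0 M; lra.
lra.
Qed.

Lemma sqr_C_sub1_le m : (C m - 1) ^+ 2 <=
  (4 * S + 16 + 4 * (2 + 2 * M ^+ 2) * (2 + 2 * S)) * sqnorm ip (psi m - chi m)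
  + 4 * (2 + 2 * S) * sqnorm ip (T (chi m)).
Proof.
(* [<psi, Theta psi> = C <psi, phi> = C] *)
have e : (C m - 1)%:C%C = (sqnorm ip (psi m) - 1)%:C%C - ip (psi m) (T (psi m)).
  by rewrite ipBr // Theta_psi ipZr // biorth eqxx mulr1 ip_self // !rmorphB rmorph1; ring.
have := normc2B_le (sqnorm ip (psi m) - 1)%:C%C (ip (psi m) (T (psi m))).
rewrite -e !normc2_real.
have := sqr_sqnorm_psi_sub1_le m; have := normc2_ip_psi_T_le m; lra.
Qed.

Lemma bounded_psum_T_chi : bounded_psum (fun m => (C m - 1) ^+ 2) ->
  bounded_psum (fun m => sqnorm ip (T (chi m))).
Proof.
move=> bC; apply: bounded_psum_le sqnorm_T_chi_le _.
have M0 : 0 <= 4 * M ^+ 2 by have := sqr_ge0 M; lra.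
apply: bounded_psumD; first apply: bounded_psumD; apply: bounded_psumZ => //.
- by eexists; exact: phi_chi_close.
- by exists S.
Qed.

Lemma bounded_psum_sqr_C_sub1 : bounded_psum (fun m => sqnorm ip (T (chi m))) ->
  bounded_psum (fun m => (C m - 1) ^+ 2).
Proof.
move=> bT; apply: bounded_psum_le sqr_C_sub1_le _.
have S0 := S_ge0; have M0 := sqr_ge0 M.
have K0 : 0 <= (2 + 2 * M ^+ 2) * (2 + 2 * S) by apply: mulr_ge0; lra.
by apply: bounded_psumD; apply: bounded_psumZ => //; [lra | exists S | lra].
Qed.

Lemma id_sub_Theta_hs_iff :
  hilbert_schmidt ip (fun x => T x) <-> bounded_psum (fun m => (C m - 1) ^+ 2).
Proof.
split=> [[_ [e [e_onb hs]]] | bC].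
  apply: bounded_psum_sqr_C_sub1.
  have [B eB] : bounded_psum (fun n => sqnorm ip (T (e n))).
    apply: summable_bounded_psum => [n|]; first exact: sqnorm_ge0.
    by apply: eq_summable hs => n; rewrite nrm_sqr.
  by exists B; apply: (hs_psum_basis_le Hip id_sub_Theta_sa e_onb chi_on eB).
split; first exact: bounded_op_id_sub.
exists chi; split => //; apply: eq_summable (fun n => esym (nrm_sqr Hip _)) _.
by apply: bounded_psum_summable => [n|]; [exact: sqnorm_ge0 | exact: bounded_psum_T_chi].
Qed.

End Metric.

Theorem lemma4p1 (R : realType) (V : lmodType R[i]) (ip : V -> V -> R[i])
  (HV : separable_inf_dim_hilbert ip)
  (H Hs : op V)
  (Hqsa : quasi_self_adjoint ip H Hs)
  (Hreal : purely_real_spectrum ip H)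
  (Hsimple : simple_spectrum H)
  (Hdiscrete : discrete_spectrum ip H)
  (psi chi phi : nat -> V)
  (Hpsi_eig : forall n : nat, exists lam : R[i], eigenvector H lam (psi n))
  (Hpsi_all : forall (lam : R[i]) (x : V), eigenvector H lam x ->
                exists (n : nat) (c : R[i]), x = c *: psi n)
  (Hpsi_basis : is_basis ip psi)
  (Hchi : orthonormal_basis ip chi)
  (Hclose : summable (fun n => nrm ip (psi n - chi n) ^+ 2))
  (Hphi_eig : forall n : nat, exists mu : R[i], eigenvector Hs mu (phi n))
  (Hbiorth : forall m n : nat, ip (psi m) (phi n) = (n == m)%:R)
  (Hphi_norm : forall n : nat, nrm ip (phi n) = 1)
  (Theta : V -> V) (C : nat -> R) (Cm Cp : R)
  (HTheta_metric : is_metric ip H Hs Theta)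
  (HTheta_form : forall x : V,
     vseries ip (fun n => ((C n)%:C)%C * ip (phi n) x *: phi n) (Theta x))
  (HCm : 0 < Cm) (HCmp : Cm <= Cp)
  (HC : forall n : nat, Cm <= C n <= Cp) :
  hilbert_schmidt ip (fun x => x - Theta x) <->
  exists alpha : nat -> R,
    (forall n : nat, C n = 1 + alpha n) /\ summable (fun n => alpha n ^+ 2).
Proof.
case: HV => Hip _ _ _.
case: HTheta_metric => [[[Theta_lin [M Theta_le]] Theta_sa] _].
have Theta_psi m : Theta (psi m) = (C m)%:C%C *: phi m.
  exact: biorth_series_psi Hip Hbiorth (HTheta_form (psi m)).
have Cm_le n : Cm <= C n by case/andP: (HC n).
have [S psi_close] : bounded_psum (fun k => sqnorm ip (psi k - chi k)).
  apply: summable_bounded_psum => [k|]; first exact: sqnorm_ge0.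
  by apply: eq_summable Hclose => k; rewrite nrm_sqr.
rewrite (id_sub_Theta_hs_iff Hip Hchi Hbiorth Hphi_norm Theta_lin Theta_le Theta_sa
           Theta_psi HCm Cm_le psi_close).
split=> [bC | [alpha [C_alpha sum_alpha]]].
  exists (fun n => C n - 1); split=> [n|]; first by rewrite addrC subrK.
  by apply: bounded_psum_summable bC => n; apply: sqr_ge0.
apply: summable_bounded_psum => [n|]; first exact: sqr_ge0.
by apply: eq_summable sum_alpha => n; rewrite C_alpha addrAC subrr add0r.
Qed.
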